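(* Let $G=(V,E)$ be a finite planar embedded graph, $\mathbf{p}$ a packing of $G$, $V=V^+\sqcup V^-\sqcup V^=\sqcup V^0$ a partition, and $\mathbf{p}'$ a proper infinitesimal flex of $\mathbf{p}$, with associated modified partition $V=\tilde V^+\sqcup\tilde V^-\sqcup\tilde V^=\sqcup\tilde V^0$. Suppose there exists an equilibrium stress $\omega$ on $(G,\mathbf{p})$ whose radial force sum $\omega_i=\sum_{j:(i,j)\in E}\omega_{ij}(r_i+r_j)$ is $\ge 0$ for $i\in\tilde V^-$, $\le 0$ for $i\in\tilde V^+$, $=0$ for $i\in\tilde V^0$, and such that $$\sum_{(i,j)\in E}\omega_{ij}\big[(\mathbf{p}_i'-\mathbf{p}_j')\cdot(\mathbf{p}_i'-\mathbf{p}_j')-(r_i'+r_j')^2\big]>0.$$ Then $\mathbf{p}'$ is not extendable.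
   Context: A packing of $G=(V,E)$, $V=\{1,\dots,n\}$, is $\mathbf{p}=(x_1,y_1,r_1,\dots,x_n,y_n,r_n)\in\mathbb{R}^{3n}$, all $r_i>0$, with $(r_i+r_j)^2=(x_i-x_j)^2+(y_i-y_j)^2$ for all $(i,j)\in E$ and the neighbors of each vertex in the same counterclockwise order as in the embedding; $\mathbf{p}_i=(x_i,y_i)$. The partition: $V^+$ (radius may increase or stay), $V^-$ (may decrease or stay), $V^=$ (fixed), $V^0$ (free). An infinitesimal flex is $\mathbf{p}'=(x_1',y_1',r_1',\dots)$ with $(\mathbf{p}_i-\mathbf{p}_j)\cdot(\mathbf{p}_i'-\mathbf{p}_j')=(r_i+r_j)(r_i'+r_j')$ for all edges; proper if $r_i'\ge 0$ on $V^+$, $\le 0$ on $V^-$, $=0$ on $V^=$. Given a proper $\mathbf{p}'$, the modified partition is obtained by moving every $i\in V^+$ with $r_i'>0$ and every $i\in V^-$ with $r_i'<0$ into $V^0$: $\tilde V^+=\{i\in V^+:r_i'=0\}$, $\tilde V^-=\{i\in V^-:r_i'=0\}$, $\tilde V^==V^=$, and $\tilde V^0$ the rest. $\mathbf{p}'$ is extendable if there is $\mathbf{p}''\in\mathbb{R}^{3n}$ with, for every $(i,j)\in E$, $(\mathbf{p}_i-\mathbf{p}_j)\cdot(\mathbf{p}_i''-\mathbf{p}_j'')-(r_i+r_j)(r_i''+r_j'')=(r_i'+r_j')^2-(\mathbf{p}_i'-\mathbf{p}_j')\cdot(\mathbf{p}_i'-\mathbf{p}_j')$, and $r_i''\ge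 0$ on $\tilde V^+$, $r_i''\le0$ on $\tilde V^-$, $r_i''=0$ on $\tilde V^=$. A stress is $\omega:E\to\mathbb{R}$; it is an equilibrium stress if $\sum_{j:(i,j)\in E}\omega_{ij}(\mathbf{p}_i-\mathbf{p}_j)=0$ for every $i$. *)

From mathcomp Require Import all_boot all_order all_algebra.
Set Implicit Arguments. Unset Strict Implicit. Unset Printing Implicit Defensive.
Import Order.TTheory GRing.Theory Num.Theory.
Local Open Scope ring_scope.

(* The embedding is given as a rotation system:
   rot i is the list of neighbours of i in counterclockwise order. *)

Definition simple_graph (n : nat) (E : rel 'I_n) : Prop :=
  (forall i, ~~ E i i) /\ (forall i j, E i j = E j i).

Definition rotation_system (n : nat) (E : rel 'I_n) (rot : 'I_n -> seq 'I_n)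
  : Prop := forall i, uniq (rot i) /\ (forall j, (j \in rot i) = E i j).

Section Geom.
Variable R : realFieldType.

Definition cross (u v : R * R) : R := u.1 * v.2 - u.2 * v.1.
Definition dot (u v : R * R) : R := u.1 * v.1 + u.2 * v.2.

(* [upper u v] : the counterclockwise angle from u to v lies in [0, pi). *)
Definition upper (u v : R * R) : bool :=
  (0 < cross u v) || ((cross u v == 0) && (0 < dot u v)).

(* [ang_lt u v w] : the ccw angle (in [0,2pi)) from u to v is strictly
   smaller than the ccw angle from u to w. *)
Definition ang_lt (u : R * R) (v w : R * R) : bool :=
  if upper u v != upper u w then upper u v else 0 < cross v w.

Definition ccw_ordered (s : seq (R * R)) : bool :=
  match s with
  | [::] => true
  | u :: t => path (ang_lt u) u t
  end.

End Geom.

Section Packing.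
Variables (R : realFieldType) (n : nat).
Implicit Types (x y r : 'I_n -> R).

Definition pt x y (i : 'I_n) : R * R := (x i, y i).
Definition vsub (a b : R * R) : R * R := (a.1 - b.1, a.2 - b.2).

Definition packing (E : rel 'I_n) (rot : 'I_n -> seq 'I_n) x y r : Prop :=
  (forall i, 0 < r i) /\
  (forall i j, E i j ->
     (r i + r j) ^+ 2 = (x i - x j) ^+ 2 + (y i - y j) ^+ 2) /\
  (forall i, ccw_ordered [seq vsub (pt x y j) (pt x y i) | j <- rot i]).

Inductive kind := KPlus | KMinus | KEq | KZero.

Definition inf_flex (E : rel 'I_n) x y r x' y' r' : Prop :=
  forall i j, E i j ->
    (x i - x j) * (x' i - x' j) + (y i - y j) * (y' i - y' j)
    = (r i + r j) * (r' i + r' j).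

Definition sign_ok (k : kind) (a : R) : Prop :=
  match k with
  | KPlus => 0 <= a
  | KMinus => a <= 0
  | KEq => a = 0
  | KZero => True
  end.

Definition force_ok (k : kind) (a : R) : Prop :=
  match k with
  | KMinus => 0 <= a
  | KPlus => a <= 0
  | KZero => a = 0
  | KEq => True
  end.

Definition proper_flex (E : rel 'I_n) (part : 'I_n -> kind) x y r x' y' r'
  : Prop := inf_flex E x y r x' y' r' /\ (forall i, sign_ok (part i) (r' i)).

Definition mod_part (part : 'I_n -> kind) (r' : 'I_n -> R) (i : 'I_n) : kind :=
  match part i with
  | KPlus => if r' i == 0 then KPlus else KZero
  | KMinus => if r' i == 0 then KMinus else KZero
  | k => k
  end.

Definition extendable (E : rel 'I_n) (part : 'I_n -> kind) x y r x' y' r'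
  : Prop :=
  exists x'' y'' r'' : 'I_n -> R,
    (forall i j, E i j ->
       (x i - x j) * (x'' i - x'' j) + (y i - y j) * (y'' i - y'' j)
       - (r i + r j) * (r'' i + r'' j)
       = (r' i + r' j) ^+ 2
         - ((x' i - x' j) ^+ 2 + (y' i - y' j) ^+ 2)) /\
    (forall i, sign_ok (mod_part part r' i) (r'' i)).

Definition stress (E : rel 'I_n) (w : 'I_n -> 'I_n -> R) : Prop :=
  forall i j, E i j -> w i j = w j i.

Definition equilibrium (E : rel 'I_n) (w : 'I_n -> 'I_n -> R) x y : Prop :=
  stress E w /\
  forall i, (\sum_(j | E i j) w i j * (x i - x j) = 0) /\
            (\sum_(j | E i j) w i j * (y i - y j) = 0).

Definition radial_force (E : rel 'I_n) (w : 'I_n -> 'I_n -> R) r i : R :=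
  \sum_(j | E i j) w i j * (r i + r j).

Definition edge_sum (E : rel 'I_n) (f : 'I_n -> 'I_n -> R) : R :=
  \sum_(i : 'I_n) \sum_(j : 'I_n | (i < j)%N && E i j) f i j.

End Packing.

(* Multiply the extension equation of each edge by ω_ij and sum over the
   edges.  On the left the stress is paired with the linearized edge map; by
   equilibrium the position terms cancel and what remains is -Σ_i r''_i ω_i
   (ω_i the radial force sum), which the sign conditions of the modified
   partition make nonnegative.  On the right one gets minus the given positive
   sum.  Neither the packing nor the flex equations enter: only the sign
   pattern of p' matters. *)

From mathcomp Require Import all_boot all_order all_algebra.
From mathcomp Require Import ring.
Set Implicit Arguments. Unset Strict Implicit. Unset Printing Implicit Defensive.
Import Order.TTheory GRing.Theory Num.Theory.
Local Open Scope ring_scope.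

Section EdgeSum.
Variables (R : realFieldType) (n : nat) (E : rel 'I_n).
Implicit Types f g : 'I_n -> 'I_n -> R.

Lemma eq_edge_sum f g :
  (forall i j, E i j -> f i j = g i j) -> edge_sum E f = edge_sum E g.
Proof.
move=> efg; apply: eq_bigr => i _.
by apply: eq_bigr => j /andP[_ Eij]; exact: efg.
Qed.

Lemma edge_sumN f : edge_sum E (fun i j => - f i j) = - edge_sum E f.
Proof. by rewrite /edge_sum -sumrN; apply: eq_bigr => i _; rewrite sumrN. Qed.

Hypothesis simpleE : simple_graph E.

Lemma sum_neighbors_edge_sum f :
  \sum_i \sum_(j | E i j) f i j = edge_sum E (fun i j => f i j + f j i).
Proof.
have [irrE symE] := simpleE.
have swap : \sum_(i : 'I_n) \sum_(j : 'I_n | (i < j)%N && E i j) f j i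
          = \sum_(i : 'I_n) \sum_(j : 'I_n | (j < i)%N && E i j) f i j.
  rewrite (exchange_big_dep predT) //=.
  by apply: eq_bigr => i _; apply: eq_bigl => j; rewrite symE.
rewrite /edge_sum; under [RHS]eq_bigr => i _ do rewrite big_split /=.
rewrite big_split /= swap -big_split /=; apply: eq_bigr => i _.
rewrite (bigID (fun j : 'I_n => (i < j)%N)) /=.
congr (_ + _); apply: eq_bigl => j; rewrite andbC // -leqNgt.
case: ltngtP => // /val_inj ->.
by rewrite (negbTE (irrE i)).
Qed.

End EdgeSum.

Lemma sign_ok_force_ok_mul_le0 (R : realFieldType) (k : kind) (a b : R) :
  sign_ok k a -> force_ok k b -> a * b <= 0.
Proof.
case: k => /= [a0 b0|a0 b0|->|_ ->]; rewrite ?mul0r ?mulr0 //.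
- exact: mulr_ge0_le0.
- by rewrite mulrC; apply: mulr_ge0_le0.
Qed.

Lemma equilibrium_virtual_work (R : realFieldType) (n : nat) (E : rel 'I_n)
    (w : 'I_n -> 'I_n -> R) (x y r x'' y'' r'' : 'I_n -> R) :
  simple_graph E -> equilibrium E w x y ->
  edge_sum E (fun i j => w i j *
    ((x i - x j) * (x'' i - x'' j) + (y i - y j) * (y'' i - y'' j)
     - (r i + r j) * (r'' i + r'' j)))
  = - \sum_i r'' i * radial_force E w r i.
Proof.
move=> simpleE [symw balanced].
pose h i j := w i j *
  ((x i - x j) * x'' i + (y i - y j) * y'' i - (r i + r j) * r'' i).
have vertex_work i : \sum_(j | E i j) h i j = - (r'' i * radial_force E w r i).
  have [bal_x bal_y] := balanced i.
  transitivity (x'' i * \sum_(j | E i j) w i j * (x i - x j)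
              + y'' i * \sum_(j | E i j) w i j * (y i - y j)
              - r'' i * radial_force E w r i).
    rewrite /radial_force !mulr_sumr -!big_split -sumrB /=.
    by apply: eq_bigr => j _; rewrite /h; ring.
  by rewrite bal_x bal_y !mulr0 add0r sub0r.
rewrite -sumrN -(eq_bigr _ (fun i _ => vertex_work i)).
rewrite sum_neighbors_edge_sum //; apply: eq_edge_sum => i j Eij.
by rewrite /h -(symw i j Eij); ring.
Qed.

Theorem mainTheorem7 (R : realFieldType) (n : nat) (E : rel 'I_n)
  (rot : 'I_n -> seq 'I_n) (x y r : 'I_n -> R) (part : 'I_n -> kind)
  (x' y' r' : 'I_n -> R) (w : 'I_n -> 'I_n -> R) :
  simple_graph E ->
  rotation_system E rot ->
  packing E rot x y r ->
  proper_flex E part x y r x' y' r' ->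
  equilibrium E w x y ->
  (forall i, force_ok (mod_part part r' i) (radial_force E w r i)) ->
  0 < edge_sum E (fun i j => w i j *
        ((x' i - x' j) ^+ 2 + (y' i - y' j) ^+ 2 - (r' i + r' j) ^+ 2)) ->
  ~ extendable E part x y r x' y' r'.
Proof.
move=> simpleE _ _ _ eqw forces pos_work [x'' [y'' [r'' [ext signs]]]].
have work := equilibrium_virtual_work r x'' y'' r'' simpleE eqw.
have virtual_work : edge_sum E (fun i j => w i j *
    ((x' i - x' j) ^+ 2 + (y' i - y' j) ^+ 2 - (r' i + r' j) ^+ 2))
  = \sum_i r'' i * radial_force E w r i.
  rewrite -[RHS]opprK -work -edge_sumN; apply: eq_edge_sum => i j Eij.
  by rewrite ext //; ring.
move: pos_work; rewrite virtual_work ltNge => /negP; apply.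
apply: sumr_le0 => i _.
exact: sign_ok_force_ok_mul_le0.
Qed.
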